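(* If $G$ is a finite non-abelian induced regular group, then $G/Z(G)$ is a $p$-group for some prime $p$.
   Context: For a finite group $G$, $C_G(x)$ denotes the centralizer of $x\in G$ and $Z(G)$ the center. The non-centralizer graph $\Upsilon_G$ is the simple graph with vertex set $G$ in which two distinct vertices $x,y$ are adjacent iff $C_G(x)\neq C_G(y)$; the induced non-centralizer graph $\Upsilon_{G\setminus Z(G)}$ is its induced subgraph on $G\setminus Z(G)$. $G$ is called induced regular if $\Upsilon_{G\setminus Z(G)}$ is a regular graph (all vertices have the same degree). *)

From mathcomp Require Import all_boot all_fingroup all_solvable pgroup center.
Set Implicit Arguments. Unset Strict Implicit. Unset Printing Implicit Defensive.
Local Open Scope group_scope.

Definition nc_adj (gT : finGroupType) (G : {group gT}) (x y : gT) : bool :=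
  (x != y) && ('C_G[x] != 'C_G[y]).

Definition induced_nc_deg (gT : finGroupType) (G : {group gT}) (x : gT) : nat :=
  #|[set y in G :\: 'Z(G) | nc_adj G x y]|.

Definition induced_regular (gT : finGroupType) (G : {group gT}) : Prop :=
  forall x y, x \in G :\: 'Z(G) -> y \in G :\: 'Z(G) ->
    induced_nc_deg G x = induced_nc_deg G y.

(* Write Z for Z(G) and F(x) for the set of elements of G with the same
   centralizer as x.  In the induced graph x is adjacent to every vertex outside
   Z except those of F(x), so G is induced regular iff all the F(x) have a common
   size k.  For a maximal centralizer C(w) one has F(w) = Z(C(w)) \ Z, hence
   t := |Z(C(w)) : Z| = k/|Z| + 1 does not depend on w.
   If a prime q divided |G/Z| but not t, an element x of order q modulo Z and a
   maximal C(w) containing C(x) would give C(xa) = C(x) for all a in Z(C(w)), so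
   F(x) would contain a coset of Z(C(w)), of size |Z|t > k.  Hence it suffices to
   rule out two distinct primes q, r (r odd) dividing t.  Products of elements of
   orders q and r modulo Z then have centralizer C(a) :&: C(b); counting them in
   F(x0), for C(x0) a largest non-maximal centralizer, shows that every
   centralizer is maximal, and then that it is abelian of order t|Z|.
   A Sylow p-subgroup P of G/Z normalizes C(z)/Z for z mapping into Z(P) and acts
   semiregularly modulo P :&: C(z)/Z on its nontrivial pi-elements, so
   |G/Z|_p divides t_p (t_pi - 1) whenever p is not in pi.  With |G/Z| = ts this
   gives s | (t_q - 1)(t_q' - 1), while the partition of G \ Z into the sets
   C(w) \ Z gives t - 1 | ts - 1; together they force s = 1, i.e. C(w) = G. *)

From mathcomp Require Import all_boot all_fingroup all_solvable pgroup center.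
From mathcomp Require Import zify.
Set Implicit Arguments. Unset Strict Implicit. Unset Printing Implicit Defensive.

Lemma pred_mul_lt_double_subn2 t c z : 1 < t -> t <= c.-1 -> 0 < z ->
  z * t.-1 < (c - 2) * (2 * z).
Proof. nia. Qed.

Lemma pred_mul_dvd_eq1 a b s : 1 < a -> 1 < b -> 0 < s -> s %| a.-1 * b.-1 ->
  (a * b).-1 %| (a * b * s).-1 -> s = 1.
Proof.
move=> a_gt1 b_gt1 s_gt0 s_dvd.
have ab_gt0 : 0 < a * b by rewrite muln_gt0 ltnW // ltnW.
have -> : (a * b * s).-1 = ((a * b).-1 * s + s.-1)%N.
  by case: (a * b) ab_gt0 => // m _; case: s s_gt0 {s_dvd} => // s _; rewrite mulSn addSn addnC.
rewrite dvdn_addr ?dvdn_mulr //; case: s s_gt0 s_dvd => [|[|s]] // _ s_dvd /dvdn_leq le_ab.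
have := dvdn_leq _ s_dvd; case: a a_gt1 {s_dvd ab_gt0} le_ab => [|[|a]] // _.
by case: b b_gt1 => [|[|b]] // _ /=; nia.
Qed.

Local Open Scope group_scope.

Section Centralizers.

Variables (gT : finGroupType) (G : {group gT}).
Implicit Types (x y z a b g s u : gT).

Lemma indexg_dvd_card_semiregular (P K : {group gT}) (S : {set gT}) :
  P \subset 'N(S) -> {in S, forall s, 'C_P[s] = K} -> #|P : K| %| #|S|.
Proof.
move=> nSP cPS; have actsPS : [acts P, on S | 'J] by rewrite astabsJ.
rewrite -(acts_sum_card_orbit actsPS); apply: dvdn_sum => _ /imsetP[s sS ->].
by rewrite card_orbit astab1J cPS.
Qed.

Lemma mem_center_subcent1 x : x \in G -> (x \in 'Z(G)) = ('C_G[x] == G).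
Proof.
move=> xG; apply/idP/eqP => [/setIP[_ cGx] | defC].
  by apply/setIidPl; rewrite sub_cent1.
by rewrite inE xG /= -sub_cent1 -{1}defC subsetIr.
Qed.

Lemma sub_subcent1 x y : x \in G -> y \in G ->
  ('C_G[x] \subset 'C_G[y]) = (y \in 'Z('C_G[x])).
Proof.
move=> xG yG; apply/idP/idP => [sCxy | /setIP[_ cCy]].
  have /subcent1P[_ cxy] : x \in 'C_G[y] by apply: (subsetP sCxy); rewrite inE xG cent1id.
  by apply/setIP; split; [apply/subcent1P | rewrite -sub_cent1 (subset_trans sCxy) ?subsetIr].
by rewrite subsetI subsetIl sub_cent1.
Qed.

Lemma center_sub_center_subcent1 x : x \in G -> 'Z(G) \subset 'Z('C_G[x]).
Proof.
move=> xG; apply/subsetP=> z zZ; have zG := subsetP (center_sub G) z zZ.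
by rewrite -sub_subcent1 //; move: zZ; rewrite mem_center_subcent1 // => /eqP->; apply: subsetIl.
Qed.

Lemma subcent1_centerM u y : u \in 'Z(G) -> y \in G -> 'C_G[u * y] = 'C_G[y].
Proof.
move=> /centerP[_ cGu] _; apply/setP=> g.
apply/subcent1P/subcent1P => -[gG /commute_sym cg]; split=> //; apply: commute_sym.
  by rewrite -(mulKg u y); apply: commuteM (commuteV (commute_sym (cGu g gG))) cg.
exact: commuteM (commute_sym (cGu g gG)) cg.
Qed.

Lemma center_subcent1_sub x : 'Z('C_G[x]) \subset G.
Proof. exact: subset_trans (center_sub _) (subsetIl _ _). Qed.

Lemma subcent1_sub_noncentral x c : x \in G :\: 'Z(G) -> c \in G ->
  'C_G[c] \subset 'C_G[x] -> c \in G :\: 'Z(G).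
Proof.
case/setDP=> xG xZ cG sCcx; rewrite inE cG andbT; apply: contra xZ.
by rewrite !mem_center_subcent1 // => /eqP eqCcG; rewrite eqEsubset subsetIl -{1}eqCcG.
Qed.

Lemma subcent1X y n : 'C_G[y] \subset 'C_G[y ^+ n].
Proof. by rewrite setIS // -!cent_cycle centS // cycleX. Qed.

Lemma subcent1M_sub_coprime x a m n : x \in G -> a \in G -> commute x a ->
  coprime m n -> x ^+ m \in 'Z(G) -> a ^+ n \in 'Z(G) ->
  'C_G[x * a] \subset 'C_G[a].
Proof.
move=> xG aG cxa cmn xmZ anZ; case: (leqP n 1) => [|n_gt1].
  case: n cmn anZ => [|[|//]] cmn anZ _.
    move: cmn xmZ; rewrite /coprime gcdn0 => /eqP->; rewrite expg1 => xZ.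
    by rewrite subcent1_centerM.
  by move: anZ; rewrite expg1 mem_center_subcent1 // => /eqP->; apply: subsetIl.
pose e := chinese m n 0 1.
have e_m : e = (e %/ m * m)%N.
  by rewrite {1}(divn_eq e m) [e %% m]chinese_modl // mod0n addn0.
have e_n : e = (e %/ n * n + 1)%N.
  by rewrite {1}(divn_eq e n) [e %% n]chinese_modr // modn_small.
set u := x ^+ (e %/ m * m) * a ^+ (e %/ n * n).
have uZ : u \in 'Z(G) by rewrite groupM // mulnC expgM groupX.
have -> : 'C_G[a] = 'C_G[(x * a) ^+ e].
  by rewrite expgMn // {1}e_m {2}e_n expgD expg1 mulgA -/u (subcent1_centerM uZ aG).
exact: subcent1X.
Qed.

Lemma subcent1M_coprime x a m n : x \in G -> a \in G -> commute x a ->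
  coprime m n -> x ^+ m \in 'Z(G) -> a ^+ n \in 'Z(G) ->
  'C_G[x * a] = 'C_G[x] :&: 'C_G[a].
Proof.
move=> xG aG cxa cmn xmZ anZ; apply/eqP; rewrite eqEsubset subsetI.
rewrite (subcent1M_sub_coprime xG aG cxa cmn xmZ anZ) andbT cxa.
have cnm : coprime n m by rewrite coprime_sym.
rewrite (subcent1M_sub_coprime aG xG (commute_sym cxa) cnm anZ xmZ) /=.
apply/subsetP=> g /setIP[/subcent1P[gG cxg] /subcent1P[_ cag]].
by apply/subcent1P; split=> //; apply/commute_sym/commuteM; apply: commute_sym.
Qed.

Lemma commute_coprime_center_commg s g m n : s \in G -> g \in G ->
  coprime m n -> s ^+ m \in 'Z(G) -> g ^+ n \in 'Z(G) -> [~ s, g] \in 'Z(G) ->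
  commute s g.
Proof.
move=> sG gG cmn smZ gnZ /centerP[_ cGc].
have csc := commute_sym (cGc s sG); have cgc := commute_sym (cGc g gG).
have cZ1 y z : y \in 'Z(G) -> z \in G -> [~ y, z] = 1.
  by move=> /centerP[_ cGy] zG; apply/eqP/commgP/cGy.
have cm : [~ s, g] ^+ m = 1 by rewrite -commXg // cZ1.
have cn : [~ s, g] ^+ n = 1 by rewrite -commgX // -invg_comm cZ1 ?invg1.
apply/commgP; rewrite -order_eq1 -dvdn1 -(eqnP cmn) dvdn_gcd.
by rewrite !order_dvdn cm cn eqxx.
Qed.

Let nZG : G \subset 'N('Z(G)) := normal_norm (center_normal G).

Lemma coset_center_eq1 y : y \in G -> (coset 'Z(G) y == 1) = (y \in 'Z(G)).
Proof. by move=> yG; apply/eqP/idP => [/(coset_idr (subsetP nZG y yG)) | /coset_id]. Qed.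

Lemma expg_order_coset_center y : y \in G -> y ^+ #[coset 'Z(G) y] \in 'Z(G).
Proof.
by move=> yG; rewrite -coset_center_eq1 ?groupX // morphX ?expg_order // (subsetP nZG).
Qed.

Lemma expg_card_quotient_center (H : {group gT}) a : H \subset G -> a \in H ->
  a ^+ #|H / 'Z(G)| \in 'Z(G).
Proof.
move=> sHG aH; have aG := subsetP sHG a aH.
by rewrite -coset_center_eq1 ?groupX // morphX ?(subsetP nZG) // expg_cardG ?mem_quotient.
Qed.

Lemma quotient_center_Cauchy (H : {group gT}) q : H \subset G -> prime q ->
  q %| #|H / 'Z(G)| -> exists2 x, x \in H :\: 'Z(G) & x ^+ q \in 'Z(G).
Proof.
move=> sHG q_pr q_dvd; have [_ /morphimP[x _ xH ->] ox] := Cauchy q_pr q_dvd.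
have xG := subsetP sHG x xH; exists x; last by rewrite -ox expg_order_coset_center.
rewrite inE xH andbT -coset_center_eq1 // -order_eq1 ox.
by apply: contraTneq q_pr => ->.
Qed.

Lemma commg_coset_center s g : s \in G -> g \in G ->
  commute (coset 'Z(G) s) (coset 'Z(G) g) -> [~ s, g] \in 'Z(G).
Proof.
move=> sG gG /commgP csg.
by rewrite -coset_center_eq1 ?groupR // morphR ?(subsetP nZG).
Qed.

Lemma commute_coset_center s g : s \in G -> g \in G ->
  coprime #[coset 'Z(G) s] #[coset 'Z(G) g] ->
  commute (coset 'Z(G) s) (coset 'Z(G) g) -> commute s g.
Proof.
move=> sG gG co_sg /(commg_coset_center sG gG).
by apply: commute_coprime_center_commg co_sg _ _; rewrite ?expg_order_coset_center.
Qed.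

Lemma subcent1_norm_coset_center z g : z \in G -> g \in G ->
  commute (coset 'Z(G) z) (coset 'Z(G) g) -> g \in 'N('C_G[z]).
Proof.
move=> zG gG /(commg_coset_center zG gG) cZ; apply/normP.
have /centerP[_ /(_ z zG) czc] := cZ.
by rewrite conjIg -cent1J (conjGid gG) conjg_mulR -czc subcent1_centerM.
Qed.

Definition cent_fiber x := [set y in G | 'C_G[y] == 'C_G[x]].

Lemma cent_fiber_subD x : x \in G :\: 'Z(G) -> cent_fiber x \subset G :\: 'Z(G).
Proof.
case/setDP=> xG xZ; apply/subsetP=> y /setIdP[yG /eqP eqCyx].
by rewrite inE yG andbT mem_center_subcent1 // eqCyx -mem_center_subcent1.
Qed.

Lemma induced_nc_degE x : x \in G :\: 'Z(G) ->
  induced_nc_deg G x = #|G :\: 'Z(G)| - #|cent_fiber x|.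
Proof.
move=> xGZ; rewrite /induced_nc_deg -(setIidPr (cent_fiber_subD xGZ)) -cardsD.
apply: eq_card => y; rewrite !inE /nc_adj; case: (y \in G); rewrite ?andbF //=.
by case: eqVneq => [-> | _]; rewrite ?eqxx ?andbF //= !andbT andbC [_ == 'C_G[y]]eq_sym.
Qed.

Lemma induced_regular_card_cent_fiber : induced_regular G ->
  {in G :\: 'Z(G) &, forall x y, #|cent_fiber x| = #|cent_fiber y|}.
Proof.
move=> regG x y xGZ yGZ; have := regG x y xGZ yGZ; rewrite !induced_nc_degE //.
have := subset_leq_card (cent_fiber_subD xGZ).
have := subset_leq_card (cent_fiber_subD yGZ).
lia.
Qed.

Lemma card_cent_fiber_partition (S : {set gT}) k : S \subset G ->
  {in S, forall y, cent_fiber y \subset S /\ #|cent_fiber y| = k} ->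
  #|S| = (#|[set 'C_G[y] | y in S]| * k)%N.
Proof.
move=> sSG fibS; rewrite -sum1_card (partition_big_imset (fun y => 'C_G[y])) /=.
rewrite -sum_nat_const; apply: eq_bigr => _ /imsetP[y yS ->].
have [/setIidPr <- <-] := fibS y yS; rewrite -sum1_card; apply: eq_bigl => z.
by rewrite !inE; case zS: (z \in S); rewrite /= ?andbT ?andbF // (subsetP sSG z zS).
Qed.

Definition maxcent w := (w \in G :\: 'Z(G)) &&
  [forall y in G :\: 'Z(G), ('C_G[w] \subset 'C_G[y]) ==> ('C_G[y] \subset 'C_G[w])].

Lemma maxcent_subD w : maxcent w -> w \in G :\: 'Z(G).
Proof. by case/andP. Qed.

Lemma maxcent_sub_eq w y : maxcent w -> y \in G :\: 'Z(G) ->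
  'C_G[w] \subset 'C_G[y] -> 'C_G[y] = 'C_G[w].
Proof.
case/andP=> _ /forall_inP maxw yGZ sCwy; apply/eqP.
by rewrite eqEsubset sCwy (implyP (maxw y yGZ)).
Qed.

Lemma maxcent_cent_eq w y : maxcent w -> y \in G :\: 'Z(G) ->
  'C_G[y] = 'C_G[w] -> maxcent y.
Proof. by case/andP=> _ maxw yGZ eqCyw; rewrite /maxcent yGZ eqCyw. Qed.

Lemma exists_maxcent x : x \in G :\: 'Z(G) ->
  exists2 w, maxcent w & 'C_G[x] \subset 'C_G[w].
Proof.
move=> xGZ; pose S := [set y in G :\: 'Z(G) | 'C_G[x] \subset 'C_G[y]].
have xS : x \in S by rewrite inE xGZ subxx.
have [w /setIdP[wGZ sCxw] maxw] := arg_maxnP (fun y => #|'C_G[y]|) xS.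
exists w => //; rewrite /maxcent wGZ; apply/forall_inP=> y yGZ; apply/implyP=> sCwy.
have yS : y \in S by rewrite inE yGZ (subset_trans sCxw sCwy).
by have/eqP <- : 'C_G[w] == 'C_G[y] by rewrite eqEcard sCwy; apply: maxw.
Qed.

Lemma cent_fiber_maxcent w : maxcent w -> cent_fiber w = 'Z('C_G[w]) :\: 'Z(G).
Proof.
move=> maxw; have /setDP[wG _] := maxcent_subD maxw.
apply/setP=> y; apply/idP/idP => [yFw | /setDP[yZCw yZ]].
  have /setDP[yG yZ] := subsetP (cent_fiber_subD (maxcent_subD maxw)) y yFw.
  by case/setIdP: yFw => _ /eqP eqCyw; rewrite inE yZ -sub_subcent1 // eqCyw subxx.
have yG : y \in G by case/setIP: yZCw => /setIP[].
rewrite inE yG; apply/eqP/(maxcent_sub_eq maxw); first by rewrite inE yZ.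
by rewrite sub_subcent1.
Qed.

Lemma subcent1_center_maxcent w b : maxcent w -> b \in 'Z('C_G[w]) :\: 'Z(G) ->
  'C_G[b] = 'C_G[w].
Proof. by move=> maxw; rewrite -cent_fiber_maxcent // => /setIdP[_ /eqP]. Qed.

End Centralizers.

Section InducedRegular.

Variables (gT : finGroupType) (G : {group gT}) (k : nat).
Hypothesis card_cent_fiber : {in G :\: 'Z(G), forall x, #|cent_fiber G x| = k}.

Let nZG : G \subset 'N('Z(G)) := normal_norm (center_normal G).
Let Z_gt0 : 0 < #|'Z(G)| := cardG_gt0 _.

(* For every maximal centralizer C_G[w] this is |Z(C_G[w]) : Z(G)|. *)
Definition center_index := ((k + #|'Z(G)|) %/ #|'Z(G)|)%N.

Lemma card_center_maxcent w : maxcent G w -> #|'Z('C_G[w])| = (k + #|'Z(G)|)%N.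
Proof.
move=> maxw; have wGZ := maxcent_subD maxw; have /setDP[wG _] := wGZ.
have sZ := center_sub_center_subcent1 wG.
rewrite -(card_cent_fiber wGZ) cent_fiber_maxcent // cardsD (setIidPr sZ).
by rewrite subnK // subset_leq_card.
Qed.

Lemma card_center_maxcentE w : maxcent G w ->
  #|'Z('C_G[w])| = (#|'Z(G)| * center_index)%N.
Proof.
move=> maxw; have /setDP[wG _] := maxcent_subD maxw.
rewrite /center_index -(card_center_maxcent maxw) [RHS]mulnC divnK //.
exact: cardSg (center_sub_center_subcent1 wG).
Qed.

Lemma card_quotient_center_maxcent w : maxcent G w ->
  #|'Z('C_G[w]) / 'Z(G)| = center_index.
Proof.
move=> maxw; have /setDP[wG _] := maxcent_subD maxw.
rewrite card_quotient ?(subset_trans (center_subcent1_sub G w)) //.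
by rewrite -divgS ?center_sub_center_subcent1 // card_center_maxcentE // mulKn.
Qed.

Lemma center_maxcent_Cauchy w q : maxcent G w -> prime q -> q %| center_index ->
  exists2 a, a \in 'Z('C_G[w]) :\: 'Z(G) & a ^+ q \in 'Z(G).
Proof.
move=> maxw q_pr q_dvd; apply: quotient_center_Cauchy q_pr _.
  exact: center_subcent1_sub.
by rewrite card_quotient_center_maxcent.
Qed.

Lemma center_index_gt0 : 0 < center_index.
Proof. by rewrite divn_gt0 // leq_addl. Qed.

Lemma card_cent_fiberE w : maxcent G w -> k = (#|'Z(G)| * center_index.-1)%N.
Proof.
move=> maxw; have := card_center_maxcentE maxw; rewrite card_center_maxcent //.
have := center_index_gt0; case: center_index => // t _; lia.
Qed.

Lemma center_index_dvd w : maxcent G w -> center_index %| #|G / 'Z(G)|.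
Proof.
by move=> maxw; rewrite -(card_quotient_center_maxcent maxw) cardSg ?quotientS ?center_subcent1_sub.
Qed.

Lemma prime_dvd_center_index q : prime q -> q %| #|G / 'Z(G)| -> q %| center_index.
Proof.
move=> q_pr q_dvd; apply: contraT => q_ndvd.
have [x xGZ xqZ] := quotient_center_Cauchy (subxx G) q_pr q_dvd.
have /setDP[xG _] := xGZ; have [w maxw sCxw] := exists_maxcent xGZ.
have /setDP[wG _] := maxcent_subD maxw; set A := 'Z('C_G[w]).
have sAG : A \subset G := center_subcent1_sub G w.
have co_q : coprime q center_index by rewrite prime_coprime.
have sxAF : x *: A \subset cent_fiber G x.
  apply/subsetP=> _ /lcosetP[a aA ->]; have aG := subsetP sAG a aA.
  have xCw : x \in 'C_G[w] by apply: (subsetP sCxw); rewrite inE xG cent1id.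
  have cxa : commute x a by apply/commute_sym; case/centerP: aA => _; apply.
  have aZ : a ^+ center_index \in 'Z(G).
    by rewrite -(card_quotient_center_maxcent maxw) expg_card_quotient_center.
  rewrite inE groupM //= (subcent1M_coprime xG aG cxa co_q xqZ aZ); apply/eqP/setIidPl.
  by rewrite (subset_trans sCxw) // sub_subcent1.
have := subset_leq_card sxAF; rewrite card_lcoset card_cent_fiber //.
rewrite card_center_maxcentE // (card_cent_fiberE maxw) leq_pmul2l //.
by have := center_index_gt0; case: center_index => // t; rewrite ltnn.
Qed.

Lemma center_index_pred_dvd w : maxcent G w ->
  center_index.-1 %| #|G / 'Z(G)|.-1.
Proof.
move=> maxw; have fibGZ : {in G :\: 'Z(G), forall y,
    cent_fiber G y \subset G :\: 'Z(G) /\ #|cent_fiber G y| = k}.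
  by move=> y yGZ; rewrite cent_fiber_subD ?card_cent_fiber.
have := card_cent_fiber_partition (subsetDl G 'Z(G)) fibGZ.
rewrite cardsD (setIidPr (center_sub G)) -(Lagrange (center_sub G)) -card_quotient //.
rewrite (card_cent_fiberE maxw) mulnCA -[X in (_ - X)%N]muln1 -mulnBr subn1 => /eqP.
by rewrite eqn_pmul2l // => /eqP->; apply: dvdn_mull.
Qed.

Lemma card_center_maxcent_expZ w r : maxcent G w -> prime r -> odd r ->
  r %| center_index ->
  2 * #|'Z(G)| <= #|[set b in 'Z('C_G[w]) :\: 'Z(G) | b ^+ r \in 'Z(G)]|.
Proof.
move=> maxw r_pr r_odd r_dvd; have /setDP[wG _] := maxcent_subD maxw.
set X := [set b in _ | _]; have sZZw := center_sub_center_subcent1 wG.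
have [b /setDP[bZw bZ] brZ] := center_maxcent_Cauchy maxw r_pr r_dvd.
have sZbX e : b ^+ e \notin 'Z(G) -> 'Z(G) :* b ^+ e \subset X.
  move=> beZ; apply/subsetP=> _ /rcosetP[z zZ ->]; have /centerP[_ cGz] := zZ.
  have beG : b ^+ e \in G by rewrite groupX ?(subsetP (center_subcent1_sub G w)).
  rewrite in_set in_setD groupMl // beZ /=; apply/andP; split.
    by apply: groupM; [apply: (subsetP sZZw) | apply: groupX].
  have -> : (z * b ^+ e) ^+ r = z ^+ r * (b ^+ r) ^+ e by rewrite expgMn 1?expgAC //; apply: cGz.
  by apply: groupM; apply: groupX.
have b2Z : b ^+ 2 \notin 'Z(G).
  apply: contra bZ => b2Z; have def_r : r = (r./2 * 2).+1.
    by rewrite -[LHS]odd_double_half r_odd muln2.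
  by move: brZ; rewrite def_r expgSr mulnC expgM groupMl // groupX.
have disj : [disjoint 'Z(G) :* b & 'Z(G) :* b ^+ 2].
  rewrite disjoints_subset; apply/subsetP=> y yb; rewrite inE (rcoset_transl (b ^+ 2) yb).
  by rewrite mem_rcoset expg2 invMg mulgA mulgV mul1g groupV.
have := subset_leq_card (_ : 'Z(G) :* b :|: 'Z(G) :* b ^+ 2 \subset X).
rewrite cardsU (disjoint_setI0 disj) cards0 subn0 !card_rcoset addnn -mul2n; apply.
by rewrite subUset sZbX // -{1}(expg1 b) sZbX ?expg1.
Qed.

Section TwoPrimes.

Variables q r : nat.
Hypotheses (q_pr : prime q) (r_pr : prime r) (q_neq_r : q != r).
Hypotheses (q_dvd : q %| center_index) (r_dvd : r %| center_index).

Let co_qr : coprime q r. Proof. by rewrite prime_coprime // dvdn_prime2. Qed.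

Let center_index_gt1 : 1 < center_index.
Proof.
exact: leq_trans (prime_gt1 q_pr) (dvdn_leq center_index_gt0 q_dvd).
Qed.

Section NonMaximal.

Hypothesis r_odd : odd r.
Variables x0 w1 : gT.
Hypotheses (x0GZ : x0 \in G :\: 'Z(G)) (x0_nmax : ~~ maxcent G x0).
(* Holds when |C_G[x0]| is largest among the non-maximal elements. *)
Hypothesis x0_cover : forall y, y \in G :\: 'Z(G) -> 'C_G[x0] \subset 'C_G[y] ->
  'C_G[y] = 'C_G[x0] \/ maxcent G y.
Hypotheses (maxw1 : maxcent G w1) (sCx0w1 : 'C_G[x0] \subset 'C_G[w1]).

Local Notation D := 'C_G[x0].
Local Notation B := 'Z('C_G[x0]).
Local Notation M := 'C_G[w1].
Local Notation Cs := [set 'C_G[y] | y in B :\: 'Z(G)].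

Let x0G : x0 \in G. Proof. by case/setDP: x0GZ. Qed.
Let sBG : B \subset G. Proof. exact: center_subcent1_sub. Qed.
Let memB y : y \in G -> (y \in B) = (D \subset 'C_G[y]).
Proof. by move=> yG; rewrite sub_subcent1. Qed.

Let sZMB : 'Z(M) \subset B.
Proof.
have /setDP[w1G _] := maxcent_subD maxw1.
apply/subsetP=> a aZM; have aG := subsetP (center_subcent1_sub G w1) a aZM.
by rewrite memB // (subset_trans sCx0w1) // sub_subcent1.
Qed.

Let M_in_Cs : M \in Cs.
Proof.
have /setDP[w1G w1Z] := maxcent_subD maxw1.
by apply/imsetP; exists w1 => //; rewrite inE w1Z memB.
Qed.

Let D_in_Cs : D \in Cs.
Proof. by have /setDP[_ x0Z] := x0GZ; apply/imsetP; exists x0; rewrite // inE x0Z memB ?subxx. Qed.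

Let M_neq_D : M != D.
Proof. by apply: contraNneq x0_nmax => eqMD; apply: maxcent_cent_eq maxw1 x0GZ _. Qed.

Let sDM_Cs : [set D; M] \subset Cs.
Proof. by rewrite subUset !sub1set D_in_Cs M_in_Cs. Qed.

Lemma card_center_nonmaxcent : #|B| = (#|'Z(G)| + #|Cs| * k)%N.
Proof.
have sBZ := center_sub_center_subcent1 x0G.
rewrite -(card_cent_fiber_partition (subset_trans (subsetDl _ _) sBG)).
  by rewrite cardsD (setIidPr sBZ) subnKC ?subset_leq_card.
move=> y /setDP[yB yZ]; have yG := subsetP sBG y yB.
have yGZ : y \in G :\: 'Z(G) by rewrite inE yZ yG.
split; last exact: card_cent_fiber.
apply/subsetP=> z zF; have /setDP[zG zZ] := subsetP (cent_fiber_subD yGZ) z zF.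
by case/setIdP: zF => _ /eqP eqCzy; rewrite inE zZ memB // eqCzy -memB.
Qed.

Lemma center_index_dvd_card_nonmaxcent : center_index %| #|Cs|.-1.
Proof.
have Cs_gt0 : 0 < #|Cs| by apply/card_gt0P; exists M.
have := cardSg sZMB; rewrite card_center_maxcentE // card_center_nonmaxcent.
have := card_cent_fiberE maxw1; have := center_index_gt0.
move: center_index #|Cs| Cs_gt0 => [|t] [|c] // _ _ ->.
rewrite mulnCA -[X in (X + _)%N]muln1 -mulnDr dvdn_pmul2l //= => t_dvd.
by rewrite -(dvdn_addl c t_dvd) addnCA add1n -addSn -mulnS dvdn_mull.
Qed.

Lemma mulg_center_nonmaxcent a b : a \in 'Z(M) :\: 'Z(G) -> a ^+ q \in 'Z(G) ->
  b \in B :\: 'Z(G) -> 'C_G[b] \notin [set D; M] -> b ^+ r \in 'Z(G) ->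
  a * b \in cent_fiber G x0.
Proof.
move=> aZMZ aqZ /setDP[bB bZ] Cb_DM brZ; have /setDP[aZM aZ] := aZMZ.
have aG := subsetP (center_subcent1_sub G w1) a aZM; have bG := subsetP sBG b bB.
have cab : commute a b.
  case/centerP: aZM => _; apply; apply: (subsetP sCx0w1).
  exact: subsetP (center_sub D) b bB.
have defCab := subcent1M_coprime aG bG cab co_qr aqZ brZ.
rewrite (subcent1_center_maxcent maxw1 aZMZ) in defCab.
have sCabM : 'C_G[a * b] \subset M by rewrite defCab subsetIl.
have abGZ := subcent1_sub_noncentral (maxcent_subD maxw1) (groupM aG bG) sCabM.
have sDCab : D \subset 'C_G[a * b] by rewrite defCab subsetI sCx0w1 -memB.
rewrite inE groupM //=; apply/eqP; case: (x0_cover abGZ sDCab) => // maxab.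
have bGZ : b \in G :\: 'Z(G) by rewrite inE bZ.
have sMCb : M \subset 'C_G[b].
  by rewrite (maxcent_sub_eq maxab (maxcent_subD maxw1) sCabM) defCab subsetIr.
have eqCbM := maxcent_sub_eq maxw1 bGZ sMCb.
by rewrite !inE eqCbM eqxx orbT in Cb_DM.
Qed.

(* a * U lies in F(x0), and every maximal centralizer above D other than M
   contributes the cosets Z b and Z b^2 of some b of order r modulo Z to U. *)
Lemma card_cent_fiber_nonmaxcent : (#|Cs| - 2) * (2 * #|'Z(G)|) <= k.
Proof.
have [a aZMZ aqZ] := center_maxcent_Cauchy maxw1 q_pr q_dvd.
set Cs' := Cs :\: [set D; M].
set U := [set b in B :\: 'Z(G) | ('C_G[b] \in Cs') && (b ^+ r \in 'Z(G))].
have sUF : a *: U \subset cent_fiber G x0.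
  apply/subsetP=> _ /lcosetP[b /setIdP[bBZ /andP[/setDP[_ Cb_DM] brZ]] ->].
  exact: mulg_center_nonmaxcent.
have card_Cs' : #|Cs'| = (#|Cs| - 2)%N.
  by rewrite cardsD (setIidPr sDM_Cs) cards2 eq_sym M_neq_D.
rewrite -card_Cs' -(card_cent_fiber x0GZ); apply: leq_trans (subset_leq_card sUF).
rewrite card_lcoset -[#|U|]sum1_card (partition_big (fun b => 'C_G[b]) (mem Cs')); last first.
  by move=> b /setIdP[_ /andP[]].
rewrite -sum_nat_const; apply: leq_sum => _ /setDP[/imsetP[y yBZ ->] Cy_DM].
have /setDP[yB yZ] := yBZ; have yG := subsetP sBG y yB.
have yGZ : y \in G :\: 'Z(G) by rewrite inE yZ yG.
have maxy : maxcent G y.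
  case: (x0_cover yGZ _) => [| eqCyD | //]; first by rewrite -memB.
  by rewrite eqCyD !inE eqxx in Cy_DM.
apply: leq_trans (card_center_maxcent_expZ maxy r_pr r_odd r_dvd) _.
rewrite sum1dep_card; apply: subset_leq_card; apply/subsetP=> b /setIdP[bZyZ brZ].
have /setDP[bZy bZ] := bZyZ; have eqCby := subcent1_center_maxcent maxy bZyZ.
have bG := subsetP (center_subcent1_sub G y) b bZy.
have Cy_Cs' : 'C_G[y] \in Cs' by rewrite in_setD Cy_DM; apply/imsetP; exists y.
apply/setIdP; rewrite eqCby eqxx; split=> //; apply/setIdP; rewrite eqCby Cy_Cs' brZ.
by split=> //; rewrite in_setD bZ memB // eqCby -memB.
Qed.

Lemma nonmaxcent_contradiction : False.
Proof.
have Cs_ge2 : 2 <= #|Cs|.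
  by have := subset_leq_card sDM_Cs; rewrite cards2 eq_sym M_neq_D.
have t_le : center_index <= #|Cs|.-1.
  by apply: dvdn_leq center_index_dvd_card_nonmaxcent; case: #|Cs| Cs_ge2 => [|[]].
have := pred_mul_lt_double_subn2 center_index_gt1 t_le Z_gt0.
by rewrite -(card_cent_fiberE maxw1) ltnNge card_cent_fiber_nonmaxcent.
Qed.

End NonMaximal.

Lemma all_maxcent : odd r -> {in G :\: 'Z(G), forall x, maxcent G x}.
Proof.
move=> r_odd x xGZ; apply/negPn/negP => x_nmax.
have xNM : x \in [set y in G :\: 'Z(G) | ~~ maxcent G y] by apply/setIdP.
have [x0 /setIdP[x0GZ x0_nmax] maxCx0] := arg_maxnP (fun y => #|'C_G[y]|) xNM.
have [w1 maxw1 sCx0w1] := exists_maxcent x0GZ.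
apply: (nonmaxcent_contradiction r_odd x0GZ x0_nmax _ maxw1 sCx0w1) => y yGZ sCx0y.
case maxy: (maxcent G y); [by right | left].
by apply/esym/eqP; rewrite eqEcard sCx0y; apply: maxCx0; apply/setIdP; rewrite maxy.
Qed.

Lemma abelian_subcent1 : {in G :\: 'Z(G), forall x, maxcent G x} ->
  {in G :\: 'Z(G), forall w, abelian 'C_G[w]}.
Proof.
move=> allmax w wGZ; have maxw := allmax w wGZ; have /setDP[wG wZ] := wGZ.
apply/center_idP/eqP; rewrite eqEsubset center_sub; apply/subsetP=> y yCw.
have /subcent1P[yG cyw] := yCw.
case yZ: (y \in 'Z(G)); first exact: subsetP (center_sub_center_subcent1 wG) y yZ.
have yGZ : y \in G :\: 'Z(G) by rewrite inE yZ.
have [a aZCwZ aqZ] := center_maxcent_Cauchy maxw q_pr q_dvd.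
have [b bZCyZ brZ] := center_maxcent_Cauchy (allmax y yGZ) r_pr r_dvd.
have /setDP[aZCw _] := aZCwZ; have /setDP[bZCy _] := bZCyZ.
have aG := subsetP (center_subcent1_sub G w) a aZCw.
have bG := subsetP (center_subcent1_sub G y) b bZCy.
have aCy : a \in 'C_G[y].
  by apply/subcent1P; split; [|apply/commute_sym; case/centerP: aZCw => _; apply].
have cab : commute a b by apply/commute_sym; case/centerP: bZCy => _; apply.
have defCab := subcent1M_coprime aG bG cab co_qr aqZ brZ.
rewrite (subcent1_center_maxcent maxw aZCwZ) in defCab.
rewrite (subcent1_center_maxcent (allmax y yGZ) bZCyZ) in defCab.
have sCabCw : 'C_G[a * b] \subset 'C_G[w] by rewrite defCab subsetIl.
have abGZ := subcent1_sub_noncentral wGZ (groupM aG bG) sCabCw.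
have eqCwab := maxcent_sub_eq (allmax _ abGZ) wGZ sCabCw.
have eqCyw : 'C_G[y] = 'C_G[w] by apply: maxcent_sub_eq maxw yGZ _; rewrite eqCwab defCab subsetIr.
have : y \in cent_fiber G w by apply/setIdP; rewrite eqCyw.
by rewrite cent_fiber_maxcent // => /setDP[].
Qed.


Section AllMaximal.

Hypothesis allmax : {in G :\: 'Z(G), forall x, maxcent G x}.

Lemma subcent1_coset_commute z g s : z \in G :\: 'Z(G) -> g \in G ->
  s \in 'C_G[z] :\: 'Z(G) -> coprime #[coset 'Z(G) s] #[coset 'Z(G) g] ->
  commute (coset 'Z(G) s) (coset 'Z(G) g) -> g \in 'C_G[z].
Proof.
move=> zGZ gG sCzZ co_sg c_sg; have /setDP[sCz _] := sCzZ.
have sG := subsetP (subsetIl G _) s sCz.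
have eqCsz : 'C_G[s] = 'C_G[z].
  apply: subcent1_center_maxcent (allmax zGZ) _.
  by rewrite (center_idP (abelian_subcent1 allmax zGZ)).
by rewrite -eqCsz; apply/subcent1P; split=> //; apply: commute_coset_center sG gG co_sg c_sg.
Qed.

Lemma subcent1_pi_elt_quotient_center p (pi : nat_pred) z (P : {group coset_of 'Z(G)}) sb :
  p \notin pi -> z \in G :\: 'Z(G) -> P \subset G / 'Z(G) -> p.-group P ->
  sb \in ('C_G[z] / 'Z(G)) :\ 1 -> pi.-elt sb -> 'C_P[sb] = P :&: ('C_G[z] / 'Z(G)).
Proof.
move=> p_pi zGZ sPG pP /setD1P[ntsb sbCz] pi_sb.
have abCz : abelian ('C_G[z] / 'Z(G)) := quotient_abelian _ (abelian_subcent1 allmax zGZ).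
apply/eqP; rewrite eqEsubset andbC setIS /=; last by rewrite sub_cent1 (subsetP abCz).
apply/subsetP=> gb /setIP[gbP /cent1P c_gs]; rewrite inE gbP.
have /morphimP[g _ gG def_gb] := subsetP sPG gb gbP; subst gb.
case/morphimP: sbCz pi_sb ntsb c_gs => s _ sCz -> pi_s nts c_gs.
have sCzZ : s \in 'C_G[z] :\: 'Z(G).
  by rewrite inE sCz andbT -coset_center_eq1 ?(subsetP (subsetIl G _) s sCz).
rewrite mem_quotient // (subcent1_coset_commute zGZ gG sCzZ) //.
apply: sub_pnat_coprime pi_s (mem_p_elt pP gbP).
by move=> x; rewrite !inE => /eqP->.
Qed.

Lemma dvdn_part_quotient_center p (pi : nat_pred) : p \notin pi ->
  #|G / 'Z(G)|`_p %| center_index`_p * (center_index`_pi).-1.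
Proof.
move=> p_pi; have [P sylP] := Sylow_exists p (G / 'Z(G)).
have sPG := pHall_sub sylP; have pP := pHall_pgroup sylP.
rewrite -(card_Hall sylP); have [-> | ntP] := eqsVneq P 1; first by rewrite cards1.
have /trivgPn[zb /setIP[zbP cPzb] ntzb] : 'Z(P) != 1.
  by rewrite (center_nil_eq1 (pgroup_nil pP)).
have /morphimP[z _ zG def_zb] := subsetP sPG zb zbP.
have zGZ : z \in G :\: 'Z(G) by rewrite inE -coset_center_eq1 // -def_zb ntzb.
have abA := abelian_subcent1 allmax zGZ.
have abAb : abelian ('C_G[z] / 'Z(G)) := quotient_abelian _ abA.
set H := 'O_pi('C_G[z] / 'Z(G)).
have cardAb : #|'C_G[z] / 'Z(G)| = center_index.
  by rewrite -(center_idP abA) card_quotient_center_maxcent ?allmax.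
have cardH : #|H| = (center_index`_pi)%N.
  by rewrite (card_Hall (nilpotent_pcore_Hall pi (abelian_nil abAb))) cardAb.
have nAbP : P \subset 'N('C_G[z] / 'Z(G)).
  apply: subset_trans (quotient_norms _ (subsetIr G 'N('C_G[z]))); apply/subsetP=> gb gbP.
  have /morphimP[g gN gG def_gb] := subsetP sPG gb gbP; rewrite def_gb mem_quotient //.
  by rewrite inE gG subcent1_norm_coset_center // -def_zb -def_gb; apply: (centP cPzb).
have nHP : P \subset 'N(H^#) by rewrite normD1 (char_norm_trans (pcore_char _ _) nAbP).
have cPH : {in H^#, forall sb, 'C_P[sb] = P :&: ('C_G[z] / 'Z(G))}.
  move=> sb /setD1P[ntsb sbH]; apply: subcent1_pi_elt_quotient_center p_pi zGZ sPG pP _ _.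
    by apply/setD1P; rewrite ntsb (subsetP (pcore_sub pi _)).
  exact: mem_p_elt (pcore_pgroup _ _) sbH.
have idx_dvd := indexg_dvd_card_semiregular nHP cPH.
have card_PAb : #|P :&: ('C_G[z] / 'Z(G))| %| center_index`_p.
  rewrite -cardAb -(part_pnat_id (pgroupS (subsetIl P _) pP)).
  by rewrite partn_dvd ?cardSg ?subsetIr.
rewrite -(Lagrange (subsetIl P ('C_G[z] / 'Z(G)))) -cardH (cardsD1 1 H) group1.
exact: dvdn_mul card_PAb idx_dvd.
Qed.

End AllMaximal.

Lemma two_primes_contradiction w : odd r -> maxcent G w -> False.
Proof.
move=> r_odd maxw; have allmax := all_maxcent r_odd.
have /setDP[wG wZ] := maxcent_subD maxw; have t_gt0 := center_index_gt0.
have [s defN] : exists s, #|G / 'Z(G)| = (center_index * s)%N.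
  by exists (#|G / 'Z(G)| %/ center_index); rewrite mulnC divnK ?(center_index_dvd maxw).
have s_gt0 : 0 < s by move: (cardG_gt0 (G / 'Z(G))); rewrite defN muln_gt0 => /andP[].
have tq_gt1 : 1 < center_index`_q by rewrite p_part_gt1 mem_primes q_pr t_gt0.
have tq'_gt1 : 1 < center_index`_q^'.
  have : center_index`_r %| center_index`_q^'.
    by apply: sub_in_partn => x _; rewrite !inE => /eqP->; rewrite eq_sym.
  move/(dvdn_leq (part_gt0 _ _)); apply: leq_trans.
  by rewrite p_part_gt1 mem_primes r_pr t_gt0.
have defT : center_index = (center_index`_q * center_index`_q^')%N by rewrite partnC.
have s_dvd : s %| (center_index`_q).-1 * (center_index`_q^').-1.
  apply/dvdn_partP => // p _.
  have dvd_sp (pi : nat_pred) : p \notin pi -> s`_p %| (center_index`_pi).-1.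
    move=> p_pi; have := dvdn_part_quotient_center allmax p_pi.
    by rewrite defN partnM // dvdn_pmul2l ?part_gt0.
  have [eq_pq | p_neq_q] := eqVneq p q.
    by apply: dvdn_mull; apply: dvd_sp; rewrite !inE eq_pq negbK.
  by apply: dvdn_mulr; apply: dvd_sp; rewrite !inE.
have s_eq1 : s = 1%N.
  apply: pred_mul_dvd_eq1 tq_gt1 tq'_gt1 s_gt0 s_dvd _.
  by rewrite -defT -defN (center_index_pred_dvd maxw).
have eqZCwG : 'Z('C_G[w]) = G.
  apply/eqP; rewrite eqEcard center_subcent1_sub card_center_maxcentE //.
  have cardG : #|G| = (#|'Z(G)| * #|G / 'Z(G)|)%N.
    by rewrite card_quotient // Lagrange ?center_sub.
  by rewrite cardG defN s_eq1 muln1 /=.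
move: wZ; rewrite mem_center_subcent1 // eqEsubset subsetIl /=.
by rewrite -{1}eqZCwG center_sub.
Qed.

End TwoPrimes.

Lemma prime_dvd_center_index_eq w q r : maxcent G w -> prime q -> prime r ->
  q %| center_index -> r %| center_index -> q = r.
Proof.
move=> maxw; wlog r_odd : q r / odd r => [hwlog q_pr r_pr q_dvd r_dvd | ].
  have [r2 | r_odd] := even_prime r_pr; last exact: hwlog.
  have [q2 | q_odd] := even_prime q_pr; first by rewrite q2 r2.
  exact: esym (hwlog r q q_odd r_pr q_pr r_dvd q_dvd).
move=> q_pr r_pr q_dvd r_dvd; apply/eqP/negPn/negP => q_neq_r.
exact: two_primes_contradiction q_pr r_pr q_neq_r q_dvd r_dvd w r_odd maxw.
Qed.

End InducedRegular.

Theorem theorem3p5 (gT : finGroupType) (G : {group gT}) :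
  ~~ abelian G -> induced_regular G ->
  exists p : nat, prime p /\ (p.-group (G / 'Z(G)))%g.
Proof.
move=> nabG regG.
have ntGZ : G / 'Z(G) != 1.
  by apply: contraNneq nabG => GZ1; apply: cyclic_center_factor_abelian; rewrite GZ1 cyclic1.
have [x0 x0GZ] : exists x0, x0 \in G :\: 'Z(G).
  apply/set0Pn; apply: contra nabG; rewrite setD_eq0 => sGZ.
  exact: subset_trans sGZ (subsetIr _ _).
have fib_x0 : {in G :\: 'Z(G), forall x, #|cent_fiber G x| = #|cent_fiber G x0|}.
  by move=> x xGZ; apply: induced_regular_card_cent_fiber.
have [w maxw _] := exists_maxcent x0GZ.
set p := pdiv #|G / 'Z(G)|; have p_pr : prime p by rewrite pdiv_prime ?cardG_gt1.
exists p; split=> //; apply/pgroupP=> q q_pr q_dvd; rewrite inE; apply/eqP.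
by apply: (prime_dvd_center_index_eq fib_x0 maxw); rewrite ?prime_dvd_center_index ?pdiv_dvd.
Qed.
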